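(* For a graph $G$ without isolated vertices, the following are equivalent: (1) $G$ is very well-covered; (2) $G$ has a perfect matching every edge of which (as a $2$-vertex set) is a strong clique; (3) $G$ has a perfect matching, and every edge of every perfect matching of $G$ is a strong clique; (4) $V(G)$ admits a partition into strong cliques of size two. In particular, every very well-covered graph is localizable.
   Context: A clique is strong if it intersects every maximal independent set. A graph is localizable if its vertex set admits a partition into strong cliques. A graph is well-covered if all its maximal independent sets have the same size; it is very well-covered if it is well-covered, has no isolated vertices, and $\alpha(G)=|V(G)|/2$, where $\alpha(G)$ is the independence number. *)

From mathcomp Require Import all_boot.
Set Implicit Arguments. Unset Strict Implicit. Unset Printing Implicit Defensive.

Section Graphs.
Variables (T : finType) (e : rel T).

Definition simple_graph : Prop := symmetric e /\ irreflexive e.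

Definition isolated (x : T) : bool := [forall y, ~~ e x y].
Definition no_isolated : Prop := forall x : T, ~~ isolated x.

Definition independent (A : {set T}) : bool :=
  [forall x in A, forall y in A, ~~ e x y].

Definition maximal_independent (A : {set T}) : bool :=
  maxset independent A.

Definition clique (C : {set T}) : bool :=
  [forall x in C, forall y in C, (x != y) ==> e x y].

Definition strong_clique (C : {set T}) : bool :=
  clique C && [forall I : {set T}, maximal_independent I ==> (C :&: I != set0)].

Definition alpha : nat := \max_(A : {set T} | independent A) #|A|.

Definition well_covered : Prop :=
  forall A B : {set T}, maximal_independent A -> maximal_independent B -> #|A| = #|B|.

Definition very_well_covered : Prop :=
  well_covered /\ no_isolated /\ 2 * alpha = #|T|.

Definition is_edge (S : {set T}) : bool :=
  [exists x, exists y, (x != y) && e x y && (S == [set x; y])].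

Definition perfect_matching (M : {set {set T}}) : bool :=
  partition M [set: T] && [forall S in M, is_edge S].

Definition localizable : Prop :=
  exists P : {set {set T}}, partition P [set: T] && [forall C in P, strong_clique C].
End Graphs.

From mathcomp Require Import all_boot zify.
Set Implicit Arguments. Unset Strict Implicit. Unset Printing Implicit Defensive.

(* If the vertices are partitioned into strong cliques, every maximal independent
   set meets every block exactly once, so all of them have the size of the
   partition; with blocks of size two this is very well-coveredness. Conversely,
   let G be very well-covered. A maximal independent set I has |I| = n/2, so a
   matching of I into its neighbourhood is perfect; Hall's condition for it comes
   from well-coveredness, which forces |Z \ I| = |I \ Z| for every other maximal
   independent set Z. Finally each edge of a perfect matching M is strong: a
   maximal independent set has |M| = alpha elements and meets each edge at most
   once, hence meets all of them. *)

Section HallMarriage.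
Variable T : finType.
Implicit Types (A D R S : {set T}) (F : T -> {set T}) (f : T -> T).

Definition hall_condition F D :=
  forall S, S \subset D -> #|S| <= #|\bigcup_(x in S) F x|.

Definition distinct_representatives F D f :=
  {in D, forall x, f x \in F x} /\ {in D &, injective f}.

Lemma bigcup_setDr F R S :
  \bigcup_(x in S) (F x :\: R) = (\bigcup_(x in S) F x) :\: R.
Proof.
apply/setP => y; rewrite inE; apply/bigcupP/andP => [[x xS] | [yR /bigcupP [x xS yF]]].
  by case/setDP => yF yR; split; last by apply/bigcupP; exists x.
by exists x; rewrite // inE yR.
Qed.

Lemma hall_conditionS F D A : hall_condition F D -> A \subset D -> hall_condition F A.
Proof. by move=> hD sAD S sSA; apply: hD (subset_trans sSA sAD). Qed.

Lemma hall_condition_critical F D S0 :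
  hall_condition F D -> S0 \subset D -> #|\bigcup_(x in S0) F x| <= #|S0| ->
  hall_condition (fun x => F x :\: \bigcup_(y in S0) F y) (D :\: S0).
Proof.
move=> hD sS0D critS0 S /subsetP sS; rewrite bigcup_setDr.
have sSD : S \subset D by apply/subsetP => x /sS /setDP [].
have dSS0 : S :&: S0 = set0.
  by apply/setP => x; rewrite !inE; apply/andP => [[/sS /setDP [_ /negP]]].
have := hD (S :|: S0); rewrite subUset sSD sS0D bigcup_setU cardsU dSS0 cards0 => /(_ isT).
rewrite cardsU cardsD setIC.
have := subset_leq_card (subsetIr (\bigcup_(x in S) F x) (\bigcup_(x in S0) F x)).
lia.
Qed.

Lemma hall_condition_slack F D x0 y0 :
  hall_condition F D -> x0 \in D ->
  (forall S, S \proper D -> S != set0 -> #|S| < #|\bigcup_(x in S) F x|) ->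
  hall_condition (fun x => F x :\ y0) (D :\ x0).
Proof.
move=> hD x0D slack S sS; rewrite bigcup_setDr.
have [-> | nS] := eqVneq S set0; first by rewrite cards0.
have := slack S (sub_proper_trans sS (properD1 x0D)) nS; have := cardsD1 y0 (\bigcup_(x in S) F x).
case: (y0 \in _); lia.
Qed.

Lemma distinct_representatives_glue F A D R f1 f2 :
  A \subset D -> distinct_representatives F A f1 -> {in A, forall x, f1 x \in R} ->
  distinct_representatives (fun x => F x :\: R) (D :\: A) f2 ->
  distinct_representatives F D (fun x => if x \in A then f1 x else f2 x).
Proof.
move=> sAD [f1F f1inj] f1R [f2F f2inj].
have f2FR x : x \in D -> x \notin A -> f2 x \in F x :\: R.
  by move=> xD xA; apply: f2F; rewrite inE xA.
split => [x xD | x y xD yD] /=.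
  by case: ifP => xA; [exact: f1F | case/setDP: (f2FR x xD (negbT xA))].
case: ifP => xA; case: ifP => yA.
- exact: f1inj.
- by move=> fxy; case/setDP: (f2FR y yD (negbT yA)); rewrite -fxy f1R.
- by move=> fxy; case/setDP: (f2FR x xD (negbT xA)); rewrite fxy f1R.
- by apply: f2inj; rewrite inE ?xA ?yA.
Qed.

(* Either a nonempty proper subset S0 of D is critical, and then S0 is matched
   on its own and D \ S0 avoiding the neighbourhood of S0, or every such subset
   has surplus and any x0 may be matched to any y0 in F x0. *)
Theorem hall_marriage F D :
  hall_condition F D -> exists f, distinct_representatives F D f.
Proof.
move: F; elim: {D}_.+1 {-2}D (ltnSn #|D|) => // n IH D ltDn F hD.
have IHD D' F' : D' \proper D -> hall_condition F' D' -> exists f, distinct_representatives F' D' f.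
  by move=> /proper_card ltD'; apply: IH; lia.
have [D0 | [x0 x0D]] := set_0Vmem D.
  by exists id; split => x; rewrite D0 inE.
have [/existsP [S0 /and3P [pS0 nS0 critS0]] | noncrit] :=
  boolP [exists S0 : {set T}, [&& S0 \proper D, S0 != set0 & #|\bigcup_(x in S0) F x| <= #|S0|]].
  have sS0D := proper_sub pS0.
  have [f1 [f1F f1inj]] := IHD _ F pS0 (hall_conditionS hD sS0D).
  have pDS0 : D :\: S0 \proper D.
    rewrite properEcard subsetDl (cardsDS sS0D) /=.
    by move: nS0; rewrite -card_gt0 => nS0; have := subset_leq_card sS0D; lia.
  have [f2 df2] := IHD _ _ pDS0 (hall_condition_critical hD sS0D critS0).
  exists (fun x => if x \in S0 then f1 x else f2 x).
  apply: distinct_representatives_glue sS0D (conj f1F f1inj) _ df2 => x xS0.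
  by apply/bigcupP; exists x => //; apply: f1F.
have [y0 y0F] : exists y0, y0 \in F x0.
  apply/set0Pn; rewrite -card_gt0.
  by have := hD [set x0]; rewrite sub1set x0D big_set1 cards1; apply.
have slack S : S \proper D -> S != set0 -> #|S| < #|\bigcup_(x in S) F x|.
  move=> pS nS; rewrite ltnNge; apply: contraNN noncrit => critS.
  by apply/existsP; exists S; rewrite pS nS.
have [f2 df2] := IHD _ _ (properD1 x0D) (hall_condition_slack y0 hD x0D slack).
exists (fun x => if x \in [set x0] then y0 else f2 x).
apply: distinct_representatives_glue df2; first by rewrite sub1set.
- by split=> [x | x y]; rewrite !inE => /eqP -> // /eqP ->.
- by move=> x _; rewrite inE.
Qed.
End HallMarriage.

Section Graph.
Variables (T : finType) (e : rel T).
Implicit Types (A B C I S W X Z : {set T}).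

Definition neighbours S := \bigcup_(x in S) [set y | e x y].

Lemma in_neighbours S y : (y \in neighbours S) = [exists x in S, e x y].
Proof.
apply/bigcupP/exists_inP => [[x xS] | [x xS exy]]; last by exists x; rewrite ?inE.
by rewrite inE; exists x.
Qed.

Lemma independentP A :
  reflect (forall x y, x \in A -> y \in A -> ~~ e x y) (independent e A).
Proof.
apply: (iffP forall_inP) => [indA x y xA | indA x xA]; first exact: (forall_inP (indA x xA)).
by apply/forall_inP => y; apply: indA.
Qed.

Lemma independentS A B : B \subset A -> independent e A -> independent e B.
Proof.
by move=> /subsetP sBA /independentP indA; apply/independentP => x y /sBA xA /sBA; apply: indA.
Qed.

Lemma independent0 : independent e set0.
Proof. by apply/independentP => x y; rewrite inE. Qed.

Lemma maximal_independentW I : maximal_independent e I -> independent e I.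
Proof. by case/maxsetP. Qed.

Lemma independent_adj_notin Z x y : independent e Z -> y \in Z -> e x y -> x \notin Z.
Proof. by move=> /independentP indZ yZ exy; apply/negP => /indZ /(_ yZ); rewrite exy. Qed.

Lemma leq_card_alpha A : independent e A -> #|A| <= alpha e.
Proof. exact: (@leq_bigmax_cond _ (independent e) (fun A : {set T} => #|A|)). Qed.

Lemma clique_independent_meet C I : clique e C -> independent e I -> #|C :&: I| <= 1.
Proof.
move=> /forall_inP clC /independentP indI; rewrite leqNgt.
apply/card_gt1P => [[x [y [/setIP [xC xI] /setIP [yC yI] nxy]]]].
by move: (indI x y xI yI); rewrite (implyP (forall_inP (clC x xC) y yC) nxy).
Qed.

Lemma card_partitionI P I :
  partition P [set: T] -> #|I| = \sum_(C in P) #|C :&: I|.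
Proof.
case/and3P => /eqP coverP trivP _.
have cardI A : #|A :&: I| = \sum_(x in A | x \in I) 1.
  by rewrite sum1dep_card; apply: eq_card => x; rewrite !inE.
transitivity #|cover P :&: I|; first by rewrite coverP setTI.
by rewrite cardI big_trivIset_cond //; apply: eq_bigr => C _; rewrite cardI.
Qed.

Hypotheses (e_sym : symmetric e) (e_irr : irreflexive e) (noiso : no_isolated e).

Lemma independent1 x : independent e [set x].
Proof. by apply/independentP => y z /set1P -> /set1P ->; rewrite e_irr. Qed.

Lemma minimal_deficient_surplus S :
  #|neighbours S| < #|S| -> (forall S', S' \proper S -> #|S'| <= #|neighbours S'|) ->
  forall W, W \subset neighbours S -> W != set0 -> #|W| < #|S :&: neighbours W|.
Proof.
move=> defS minS W sWN /set0Pn [w wW].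
set A := S :&: neighbours W.
have [x xA] : exists x, x \in A.
  move: (subsetP sWN w wW); rewrite in_neighbours => /exists_inP [x xS exw].
  by exists x; rewrite inE xS in_neighbours; apply/exists_inP; exists w; rewrite // e_sym.
have pSA : S :\: A \proper S.
  case/setIP: (xA) => xS _; apply/properP; split; first exact: subsetDl.
  by exists x; rewrite // inE xA.
have sNSA : neighbours (S :\: A) \subset neighbours S :\: W.
  apply/subsetP => y; rewrite in_neighbours => /exists_inP [z /setDP [zS zA] ezy].
  rewrite inE in_neighbours; apply/andP; split; last by apply/exists_inP; exists z.
  apply: contraNN zA => yW; rewrite inE zS in_neighbours.
  by apply/exists_inP; exists y; rewrite // e_sym.
have := minS _ pSA; have := subset_leq_card sNSA.
rewrite !cardsDS ?subsetIl //; have := subset_leq_card sWN.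
have := subset_leq_card (subsetIl S (neighbours W)); lia.
Qed.

Section WellCovered.
Hypothesis wc : well_covered e.

Lemma well_covered_card I : maximal_independent e I -> #|I| = alpha e.
Proof.
move=> maxI.
have [A indA alphaA] : {A | independent e A & alpha e = #|A|}.
  by apply: eq_bigmax_cond; apply/card_gt0P; exists set0; exact: independent0.
have [Z maxZ sAZ] := maxset_exists indA.
rewrite (wc maxI maxZ) alphaA; apply/eqP.
rewrite eqn_leq [#|A| <= _]subset_leq_card // andbT -alphaA.
exact/leq_card_alpha/maximal_independentW.
Qed.

Lemma well_covered_cardsD I Z :
  maximal_independent e I -> maximal_independent e Z -> #|Z :\: I| = #|I :\: Z|.
Proof.
move=> maxI maxZ; have := wc maxI maxZ.
by rewrite (cardsD Z) (cardsD I) setIC; have := cardsUI I Z; lia.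
Qed.

Lemma leq_card_neighbours_maximal I X :
  maximal_independent e I -> independent e X -> X \subset ~: I ->
  #|X| <= #|I :&: neighbours X|.
Proof.
move=> maxI indX /subsetP sXI.
have indI := maximal_independentW maxI.
set NX := I :&: neighbours X.
have indXI : independent e (X :|: (I :\: NX)).
  apply/independentP => x y /setUP [xX | /setDP [xI xNX]] /setUP [yX | /setDP [yI yNX]].
  - exact: (independentP _ indX).
  - apply: contraNN yNX => exy; rewrite inE yI in_neighbours.
    by apply/exists_inP; exists x.
  - apply: contraNN xNX => exy; rewrite inE xI in_neighbours.
    by apply/exists_inP; exists y; rewrite // e_sym.
  - exact: (independentP _ indI).
have [Z maxZ /subsetP sXIZ] := maxset_exists indXI.
have sXZI : X \subset Z :\: I.
  by apply/subsetP => x xX; rewrite inE sXIZ ?inE ?xX // andbT -in_setC sXI.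
have sIZNX : I :\: Z \subset NX.
  apply/subsetP => x /setDP [xI xZ]; apply: contraNT xZ => xNX.
  by rewrite sXIZ // in_setU in_setD xNX xI orbT.
rewrite (leq_trans (subset_leq_card sXZI)) // (well_covered_cardsD maxI maxZ).
exact: subset_leq_card.
Qed.

(* If S were deficient, take a maximal independent Z through a neighbour b of S.
   The part of Y = Z \ I inside N(S) has more neighbours in S than elements (by
   minimality of S), the rest at least as many neighbours in I as elements; these
   neighbour sets are disjoint subsets of I \ Z, contradicting |Z \ I| = |I \ Z|. *)
Lemma hall_condition_minimal I S :
  maximal_independent e I -> S \subset I ->
  (forall S', S' \proper S -> #|S'| <= #|neighbours S'|) -> #|S| <= #|neighbours S|.
Proof.
move=> maxI /subsetP sSI minS; rewrite leqNgt; apply/negP => defS.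
have surplus := minimal_deficient_surplus defS minS.
have [s sS] : exists s, s \in S by apply/set0Pn; rewrite -card_gt0; case: #|S| defS.
have [b esb] : exists b, e s b.
  by move: (noiso s); rewrite negb_forall => /existsP [b /negPn]; exists b.
have bNS : b \in neighbours S by rewrite in_neighbours; apply/exists_inP; exists s.
have bI : b \notin I.
  by apply: independent_adj_notin (maximal_independentW maxI) (sSI s sS) _; rewrite e_sym.
have [Z maxZ /subsetP sbZ] := maxset_exists (independent1 b).
have indZ := maximal_independentW maxZ.
set Y := Z :\: I.
set A1 := S :&: neighbours (Y :&: neighbours S).
set A2 := I :&: neighbours (Y :\: neighbours S).
have ltA1 : #|Y :&: neighbours S| < #|A1|.
  apply: surplus; first exact: subsetIr.
  by apply/set0Pn; exists b; rewrite !inE bNS bI sbZ ?inE.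
have leA2 : #|Y :\: neighbours S| <= #|A2|.
  apply: leq_card_neighbours_maximal => //.
    by apply: independentS indZ; apply: subset_trans (subsetDl _ _) (subsetDl _ _).
  by apply/subsetP => y; rewrite !inE => /and3P [].
have notinZ W x : W \subset Y -> x \in neighbours W -> x \notin Z.
  move=> /subsetP sWY; rewrite in_neighbours => /exists_inP [y yW eyx].
  have /setDP [yZ _] := sWY y yW.
  by apply: independent_adj_notin indZ yZ _; rewrite e_sym.
have sA12 : A1 :|: A2 \subset I :\: Z.
  apply/subsetP => x; rewrite !inE => /orP [/andP [xS xNW] | /andP [xI xNW]].
    by rewrite (notinZ _ _ (subsetIl _ _) xNW) sSI.
  by rewrite (notinZ _ _ (subsetDl _ _) xNW).
have dA12 : A1 :&: A2 = set0.
  apply/setP => x; rewrite in_set0; apply/negP => /setIP [/setIP [xS _] /setIP [_ xNW]].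
  move: xNW; rewrite in_neighbours => /exists_inP [y]; rewrite inE => /andP [yNS _] eyx.
  by move: yNS; rewrite in_neighbours => /exists_inP; case; exists x; rewrite // e_sym.
have := subset_leq_card sA12; rewrite cardsU dA12 cards0 subn0.
rewrite -(well_covered_cardsD maxI maxZ) -/Y -(cardsID (neighbours S) Y); lia.
Qed.

Lemma hall_condition_maximal_independent I :
  maximal_independent e I -> hall_condition (fun x => [set y | e x y]) I.
Proof.
move=> maxI S; elim: {S}_.+1 {-2}S (ltnSn #|S|) => // n IH S ltSn sSI.
apply: (hall_condition_minimal maxI sSI) => S' pS'.
apply: IH (subset_trans (proper_sub pS') sSI); have := proper_card pS'; lia.
Qed.

End WellCovered.

Lemma perfect_matching_imset I f :
  {in I, forall x, e x (f x)} -> {in I &, injective f} -> f @: I = ~: I ->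
  perfect_matching e [set [set x; f x] | x in I].
Proof.
move=> eIf finj fI.
have fxI x : x \in I -> f x \notin I by move=> xI; rewrite -in_setC -fI imset_f.
apply/andP; split; [apply/and3P; split | ].
- apply/eqP/setP => v; rewrite inE; apply/bigcupP.
  have [vI | vI] := boolP (v \in I).
    by exists [set v; f v]; [apply/imsetP; exists v | rewrite set21].
  have /imsetP [x xI ->] : v \in f @: I by rewrite fI inE.
  by exists [set x; f x]; [apply/imsetP; exists x | rewrite set22].
- apply/trivIsetP => _ _ /imsetP [x xI ->] /imsetP [y yI ->] nxy.
  rewrite -setI_eq0; apply/eqP/setP => z; rewrite !inE.
  apply/negP => /andP [/orP [/eqP zx | /eqP zfx] /orP [/eqP zy | /eqP zfy]].
  + by move: nxy; rewrite -zx -zy eqxx.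
  + by move: (fxI y yI); rewrite -zfy zx xI.
  + by move: (fxI x xI); rewrite -zfx zy yI.
  + by move: nxy; rewrite (finj x y xI yI) ?eqxx // -zfx -zfy.
- by apply/imsetP => [[x _ /setP /(_ x)]]; rewrite !inE eqxx.
- apply/forall_inP => _ /imsetP [x xI ->]; apply/existsP; exists x; apply/existsP; exists (f x).
  rewrite eqxx eIf // !andbT; apply/eqP => xfx.
  by move: (fxI x xI); rewrite -xfx xI.
Qed.

Lemma very_well_covered_perfect_matching :
  very_well_covered e -> exists M, perfect_matching e M.
Proof.
case=> wc [_ alphaT].
have [I maxI _] := maxset_exists independent0.
have [f [fN finj]] := hall_marriage (hall_condition_maximal_independent wc maxI).
have eIf : {in I, forall x, e x (f x)} by move=> x /fN; rewrite inE.
exists [set [set x; f x] | x in I]; apply: perfect_matching_imset => //.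
have sfI : f @: I \subset ~: I.
  apply/subsetP => _ /imsetP [x xI ->]; rewrite inE.
  by apply: (independent_adj_notin (maximal_independentW maxI) xI); rewrite e_sym eIf.
apply/eqP; rewrite eqEcard sfI card_in_imset //.
by have := cardsC I; rewrite (well_covered_card wc maxI); lia.
Qed.

Lemma is_edge_clique S : is_edge e S -> clique e S && (#|S| == 2).
Proof.
case/existsP => x /existsP [y /andP [/andP [nxy exy] /eqP ->]].
rewrite cards2 nxy eqxx andbT.
apply/forall_inP => u uS; apply/forall_inP => v vS; apply/implyP.
by move: uS vS; rewrite !inE => /orP [] /eqP -> /orP [] /eqP ->; rewrite ?eqxx // e_sym.
Qed.

Lemma card_pair_partition P :
  partition P [set: T] -> {in P, forall C, #|C| = 2} -> #|T| = 2 * #|P|.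
Proof.
move=> partP cardP; rewrite -cardsT (card_partition partP) (eq_bigr (fun=> 2)) //.
by rewrite sum_nat_const mulnC.
Qed.

Lemma card_maximal_strong_partition P I :
  partition P [set: T] -> {in P, forall C, strong_clique e C} ->
  maximal_independent e I -> #|I| = #|P|.
Proof.
move=> partP strongP maxI; rewrite (card_partitionI I partP) -sum1_card.
apply: eq_bigr => C /strongP /andP [clC /forallP /(_ I)]; rewrite maxI -card_gt0 /=.
by have := clique_independent_meet clC (maximal_independentW maxI); lia.
Qed.

Lemma pair_partition_very_well_covered P :
  partition P [set: T] && [forall C in P, strong_clique e C && (#|C| == 2)] ->
  very_well_covered e.
Proof.
case/andP=> partP /forall_inP pairP.
have strongP : {in P, forall C, strong_clique e C} by move=> C /pairP /andP [].
have cardP : {in P, forall C, #|C| = 2} by move=> C /pairP /andP [_ /eqP].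
split.
  by move=> A B maxA maxB; rewrite !(card_maximal_strong_partition partP strongP).
split => //; rewrite (card_pair_partition partP cardP); congr (2 * _).
apply/eqP; rewrite eqn_leq; apply/andP; split.
  apply/bigmax_leqP => A indA; have [Z maxZ sAZ] := maxset_exists indA.
  by rewrite -(card_maximal_strong_partition partP strongP maxZ) subset_leq_card.
have [I maxI _] := maxset_exists independent0.
by rewrite -(card_maximal_strong_partition partP strongP maxI) leq_card_alpha ?maximal_independentW.
Qed.

Lemma clique_partition_strong P :
  partition P [set: T] -> {in P, forall C, clique e C} ->
  (forall I, maximal_independent e I -> #|I| = #|P|) -> {in P, forall C, strong_clique e C}.
Proof.
move=> partP clP cardI C CP; apply/andP; split; first exact: clP.
apply/forall_inP => I maxI; rewrite -card_gt0.
(* |I| is the sum over P of |C :&: I| <= 1, with equality iff I meets every block. *)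
have meet1 D : D \in P -> #|D :&: I| <= 1 ?= iff (#|D :&: I| == 1).
  by move=> /clP clD; split; first exact: clique_independent_meet clD (maximal_independentW maxI).
have := (leqif_sum meet1).2; rewrite sum1_card -card_partitionI // cardI // eqxx.
by move=> /esym /forall_inP /(_ C CP) /eqP ->.
Qed.

Lemma perfect_matching_strong M :
  very_well_covered e -> perfect_matching e M -> {in M, forall S, strong_clique e S}.
Proof.
case=> wc [_ alphaT] /andP [partM /forall_inP edgeM].
have cardM : {in M, forall C, #|C| = 2} by move=> C /edgeM /is_edge_clique /andP [_ /eqP].
apply: clique_partition_strong => // [C /edgeM /is_edge_clique /andP [] // | I maxI].
by have := card_pair_partition partM cardM; rewrite (well_covered_card wc maxI); lia.
Qed.

Lemma strong_matching_pair_partition M :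
  perfect_matching e M -> {in M, forall S, strong_clique e S} ->
  partition M [set: T] && [forall C in M, strong_clique e C && (#|C| == 2)].
Proof.
case/andP=> partM /forall_inP edgeM strongM; rewrite partM; apply/forall_inP => C CM.
by rewrite strongM //; case/andP: (is_edge_clique (edgeM C CM)).
Qed.
End Graph.

Theorem mainTheorem5 (T : finType) (e : rel T) :
  simple_graph e -> no_isolated e ->
  (very_well_covered e <->
     exists M : {set {set T}}, perfect_matching e M && [forall S in M, strong_clique e S])
  /\ (very_well_covered e <->
     (exists M : {set {set T}}, perfect_matching e M) /\
     (forall M : {set {set T}}, perfect_matching e M -> forall S, S \in M -> strong_clique e S))
  /\ (very_well_covered e <->
     exists P : {set {set T}}, partition P [set: T] &&
        [forall C in P, strong_clique e C && (#|C| == 2)])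
  /\ (very_well_covered e -> localizable e).
Proof.
move=> [e_sym e_irr] noiso.
have vwc_pm := very_well_covered_perfect_matching e_sym e_irr noiso.
have pm_strong := perfect_matching_strong e_sym.
have to_vwc := pair_partition_very_well_covered noiso.
have to_pairs := strong_matching_pair_partition e_sym.
have vwc_pairs : very_well_covered e -> exists P : {set {set T}}, partition P [set: T] &&
    [forall C in P, strong_clique e C && (#|C| == 2)].
  by move=> vwc; have [M pmM] := vwc_pm vwc; exists M; apply: to_pairs pmM (pm_strong _ vwc pmM).
split; [split | split; [split | split; [split |]]].
- move=> vwc; have [M pmM] := vwc_pm vwc.
  by exists M; rewrite pmM; apply/forall_inP; apply: pm_strong.
- by case=> M /andP [pmM /forall_inP strongM]; apply: to_vwc (to_pairs _ pmM strongM).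
- by move=> vwc; split; [apply: vwc_pm | move=> M; apply: pm_strong].
- by case=> [[M pmM] strongM]; apply: to_vwc (to_pairs _ pmM (strongM M pmM)).
- exact: vwc_pairs.
- by case=> P; apply: to_vwc.
- move=> /vwc_pairs [P /andP [partP /forall_inP pairsP]].
  by exists P; rewrite partP; apply/forall_inP => C /pairsP /andP [].
Qed.
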